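(* Let $T=(T_a,T_b)$ be the GFB tree with $n\geq 2$ leaves. Then $T_a$ and $T_b$ are also GFB trees (i.e. $T_a=T^{gfb}_{n_a}$ and $T_b=T^{gfb}_{n_b}$, where $n_a,n_b$ are their numbers of leaves).
   Context: A rooted binary tree with $n\geq 2$ leaves is a rooted tree whose root has degree 2 and all other internal nodes have degree 3; for $n=1$ it is a single node. Trees are considered up to isomorphism. $T=(T_a,T_b)$ denotes the decomposition into the subtrees rooted at the two children of the root. The GFB tree $T_n^{gfb}$ is the output of: start with $n$ single-node trees; while more than one tree remains, remove a tree $u$ of minimal size (number of leaves), then remove a tree $v$ of minimal size among the remaining ones, and insert the tree with a new root whose children are the roots of $u$ and $v$; output the remaining tree. *)

From mathcomp Require Import all_boot.
From Stdlib Require Import Permutation Relation_Operators.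
Set Implicit Arguments. Unset Strict Implicit. Unset Printing Implicit Defensive.

Inductive btree : Type :=
| Leaf : btree
| Node : btree -> btree -> btree.

Fixpoint nleaves (t : btree) : nat :=
  match t with Leaf => 1 | Node a b => nleaves a + nleaves b end.

Inductive iso : btree -> btree -> Prop :=
| iso_leaf : iso Leaf Leaf
| iso_node a b a' b' : iso a a' -> iso b b' -> iso (Node a b) (Node a' b')
| iso_swap a b a' b' : iso a b' -> iso b a' -> iso (Node a b) (Node a' b').

(* One step of the GFB process on a multiset (list up to permutation) of
   trees: remove a tree u of minimal size, then a tree v of minimal size
   among the remaining ones, and insert the tree with root children u, v. *)
Definition gfb_step (s s' : seq btree) : Prop :=
  exists u v r,
    Permutation s (u :: v :: r) /\
    (forall t, List.In t (v :: r) -> nleaves u <= nleaves t) /\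
    (forall t, List.In t r -> nleaves v <= nleaves t) /\
    s' = Node u v :: r.

Definition gfb_output (n : nat) (T : btree) : Prop :=
  clos_refl_trans (seq btree) gfb_step (nseq n Leaf) [:: T].

(* T is "the" GFB tree with n leaves (trees considered up to isomorphism). *)
Definition is_gfb (n : nat) (T : btree) : Prop :=
  exists T', gfb_output n T' /\ iso T T'.

From mathcomp Require Import all_boot.
From Stdlib Require Import Permutation Relation_Operators Operators_Properties Lia.
From mathcomp Require Import zify.

Set Implicit Arguments.
Unset Strict Implicit.
Unset Printing Implicit Defensive.

(* A GFB step only compares the two merged trees with lower bounds on the
   sizes of the other trees, so it remains a GFB step when the untouched trees
   are restricted to a sub-forest.  Hence any splitting of the final forest of
   a run into two sub-forests pulls back, step by step, to a splitting of the
   initial forest whose two parts run separately to the two sub-forests.  For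
   the run whose last step merges T_a and T_b, the initial forest consists of
   single leaves, and so T_a and T_b are GFB outputs themselves. *)

Definition gfb_reach := clos_refl_trans (seq btree) gfb_step.

(* A step always produces a list of the shape [Node u v :: r], so reachable
   forests are compared up to reordering. *)
Definition gfb_mreach (s t : seq btree) : Prop :=
  exists t', gfb_reach s t' /\ Permutation t' t.

Definition leaves (s : seq btree) : nat := sumn (map nleaves s).

Lemma gfb_step_sub u v r r' :
  (forall t, List.In t (v :: r) -> nleaves u <= nleaves t) ->
  (forall t, List.In t r -> nleaves v <= nleaves t) ->
  List.incl r' r -> gfb_step (u :: v :: r') (Node u v :: r').
Proof.
move=> min_u min_v sub_r; exists u, v, r'; split; first exact: Permutation_refl.
split; last by split=> // t /sub_r; apply: min_v.
by move=> t [<-|/sub_r rt]; apply: min_u; [left | right].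
Qed.

Lemma gfb_step_perml s1 s2 t :
  Permutation s1 s2 -> gfb_step s2 t -> gfb_step s1 t.
Proof.
move=> p12 [u [v [r [p2 mins]]]]; exists u, v, r; split=> //.
exact: Permutation_trans p12 p2.
Qed.

Lemma gfb_mreach_refl s : gfb_mreach s s.
Proof. by exists s; split; [apply: rt_refl | apply: Permutation_refl]. Qed.

Lemma gfb_mreach_perml s1 s2 t :
  Permutation s1 s2 -> gfb_mreach s2 t -> gfb_mreach s1 t.
Proof.
move=> p12 [t' [/clos_rt_rt1n_iff r2 pt]]; case: r2 pt => [|y z st2 rz] pt.
- by exists s1; split; [apply: rt_refl | apply: Permutation_trans p12 pt].
- exists z; split=> //; apply: rt_trans (rt_step _ _ _ _ _) (clos_rt1n_rt _ _ _ _ rz).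
  exact: gfb_step_perml st2.
Qed.

Lemma gfb_mreach_trans s m t :
  gfb_mreach s m -> gfb_mreach m t -> gfb_mreach s t.
Proof.
move=> [m' [rm pm]] /(gfb_mreach_perml pm) [t' [rt pt]].
by exists t'; split=> //; apply: rt_trans rm rt.
Qed.

Lemma gfb_mreach_stepl s1 s2 t :
  gfb_step s1 s2 -> gfb_mreach s2 t -> gfb_mreach s1 t.
Proof.
move=> st [t' [r2 pt]]; exists t'; split=> //.
exact: rt_trans (rt_step _ _ _ _ st) r2.
Qed.

Lemma gfb_step_restrict u v r s1 s2 :
  (forall t, List.In t (v :: r) -> nleaves u <= nleaves t) ->
  (forall t, List.In t r -> nleaves v <= nleaves t) ->
  Permutation (Node u v :: r) (s1 ++ s2) -> List.In (Node u v) s1 ->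
  exists s1', Permutation (u :: v :: r) (s1' ++ s2) /\ gfb_mreach s1' s1.
Proof.
move=> min_u min_v p in_s1.
have [l1 [l2 def_s1]] := List.in_split _ _ in_s1; subst s1.
have p_s1 : Permutation (Node u v :: l1 ++ l2) (l1 ++ Node u v :: l2).
  exact: Permutation_middle.
have p_r : Permutation r ((l1 ++ l2) ++ s2).
  apply: (Permutation_cons_inv (a := Node u v)); apply: Permutation_trans p _.
  by rewrite -!catA; apply: Permutation_sym; apply: Permutation_middle.
exists (u :: v :: l1 ++ l2); split; first by do 2 apply: perm_skip.
have sub_r : List.incl (l1 ++ l2) r.
  move=> t lt; apply: Permutation_in (Permutation_sym p_r) _.
  by apply: List.in_or_app; left.
apply: gfb_mreach_stepl (gfb_step_sub min_u min_v sub_r) _.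
by exists (Node u v :: l1 ++ l2); split; [apply: rt_refl | exact: p_s1].
Qed.

Lemma gfb_reach_split s t :
  gfb_reach s t -> forall ta tb, Permutation t (ta ++ tb) ->
  exists sa sb, [/\ Permutation s (sa ++ sb), gfb_mreach sa ta & gfb_mreach sb tb].
Proof.
move=> /clos_rt_rt1n_iff; elim=> [s0 ta tb p | s0 y t0 st _ IH ta tb p].
  by exists ta, tb; split=> //; apply: gfb_mreach_refl.
have [sa1 [sb1 [p1 ra rb]]] := IH _ _ p.
case: st => [u [v [r [p0 [min_u [min_v def_y]]]]]]; subst y.
have in_y : List.In (Node u v) (sa1 ++ sb1) by apply: Permutation_in p1 _; left.
case: (List.in_app_or _ _ _ in_y) => [in_a | in_b].
- have [sa [pa ra']] := gfb_step_restrict min_u min_v p1 in_a.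
  exists sa, sb1; split=> //; last exact: gfb_mreach_trans ra' ra.
  exact: Permutation_trans p0 pa.
- have p1' := Permutation_trans p1 (Permutation_app_comm _ _).
  have [sb [pb rb']] := gfb_step_restrict min_u min_v p1' in_b.
  exists sa1, sb; split=> //; last exact: gfb_mreach_trans rb' rb.
  exact: Permutation_trans p0 (Permutation_trans pb (Permutation_app_comm _ _)).
Qed.

Lemma leaves_perm s t : Permutation s t -> leaves s = leaves t.
Proof. by rewrite /leaves; elim=> //= [x l l' _ IH|x y l|l l' l'' _ IH1 _ IH2]; lia. Qed.

Lemma gfb_reach_leaves s t : gfb_reach s t -> leaves s = leaves t.
Proof.
elim=> // [x y [u [v [r [p [_ [_ ->]]]]]]|x y z _ -> _ ->] //.
by rewrite (leaves_perm p) /leaves /=; lia.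
Qed.

Lemma leaves_nseq_Leaf k : leaves (nseq k Leaf) = k.
Proof. by elim: k => //= k; rewrite /leaves /= => ->. Qed.

Lemma perm_nseq_catl (T : Type) (x : T) n s1 s2 :
  Permutation (nseq n x) (s1 ++ s2) -> s1 = nseq (size s1) x.
Proof.
move=> p; have in_nseq y : List.In y (nseq n x) -> y = x.
  by elim: n {p} => //= n IH [-> | /IH].
have all_x y : List.In y s1 -> y = x.
  move=> s1y; apply: in_nseq; apply: Permutation_in (Permutation_sym p) _.
  by apply: List.in_or_app; left.
elim: s1 {p} all_x => //= y s1 IH all_x.
by rewrite (all_x y (or_introl erefl)) -IH // => z s1z; apply: all_x; right.
Qed.

Lemma gfb_reach_subforest n t ta tb :
  gfb_reach (nseq n Leaf) t -> Permutation t (ta ++ tb) ->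
  gfb_mreach (nseq (leaves ta) Leaf) ta.
Proof.
move=> rt pt; have [sa [sb [p [t' [ra pa]] _]]] := gfb_reach_split rt pt.
have def_sa := perm_nseq_catl p.
have -> : leaves ta = size sa.
  by rewrite -(leaves_perm pa) -(gfb_reach_leaves ra) {1}def_sa leaves_nseq_Leaf.
by rewrite -def_sa; exists t'.
Qed.

Lemma iso_nleaves a b : iso a b -> nleaves a = nleaves b.
Proof. by elim=> //= *; lia. Qed.

Lemma gfb_output_last_step n a b : gfb_output n (Node a b) ->
  exists2 y, gfb_reach (nseq n Leaf) y & Permutation y ([:: a] ++ [:: b]).
Proof.
move=> /clos_rt_rtn1_iff r; inversion r as [def_n | y z st ry def_z]; subst.
  by case: n {r} def_n => [|[|n]].
case: st => [u [v [r' [p [_ [_ [-> -> def_r']]]]]]]; subst r'.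
by exists y => //; apply/clos_rt_rtn1_iff.
Qed.

Lemma gfb_output_subtrees n a b : gfb_output n (Node a b) ->
  gfb_output (nleaves a) a /\ gfb_output (nleaves b) b.
Proof.
move=> /gfb_output_last_step [y ry p].
have gfb_single t : gfb_mreach (nseq (leaves [:: t]) Leaf) [:: t] ->
    gfb_output (nleaves t) t.
  move=> [t' [rt pt]]; have def_t' := Permutation_length_1_inv (Permutation_sym pt).
  by move: rt; rewrite def_t' /leaves /= addn0.
have p' : Permutation y ([:: b] ++ [:: a]).
  exact: Permutation_trans p (Permutation_app_comm [:: a] [:: b]).
by split; apply: gfb_single; [apply: gfb_reach_subforest ry p |
  apply: gfb_reach_subforest ry p'].
Qed.

Theorem lemma6 (n : nat) (Ta Tb : btree) :
  2 <= n -> is_gfb n (Node Ta Tb) ->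
  is_gfb (nleaves Ta) Ta /\ is_gfb (nleaves Tb) Tb.
Proof.
move=> _ [T' [out_T' iso_T]].
inversion iso_T as [|a b a' b' iso_a iso_b|a b a' b' iso_a iso_b]; subst;
  have [out_a' out_b'] := gfb_output_subtrees out_T';
  rewrite (iso_nleaves iso_a) (iso_nleaves iso_b).
- by split; [exists a' | exists b'].
- by split; [exists b' | exists a'].
Qed.
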